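(* Let $k$ be a field of characteristic $\neq 2$ containing $\sqrt{-1}$, and let $b,\beta$ be independent indeterminates. The affine conic over $k(b,\beta)$ in the variables $a,\alpha$ given by $$a^2\beta(1-\beta^2)=\alpha^2b(1-b^2)+b\beta(b^2-\beta^2)$$ has no $k(b,\beta)$-rational point.
   Context: This conic is the generic fibre of the projection $(a,b,\alpha,\beta)\mapsto(b,\beta)$ restricted to the hypersurface $H$ birational to the Ueno–Campana threefold. *)

From HB Require Import structures.
From mathcomp Require Import all_boot all_order all_algebra.
From mathcomp Require Import fraction.
Set Implicit Arguments. Unset Strict Implicit. Unset Printing Implicit Defensive.
Import GRing.Theory.
Local Open Scope ring_scope.

Definition Kb (k : fieldType) : fieldType := {fraction {poly k}}.
(* k(b,beta) = k(b)(beta) : rational function field in two independent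
   indeterminates b, beta over k *)
Definition Kbbeta (k : fieldType) : fieldType := {fraction {poly Kb k}}.

Definition ind_b (k : fieldType) : Kbbeta k :=
  FracField.tofrac ((FracField.tofrac ('X : {poly k}) : Kb k)%:P : {poly Kb k}).
Definition ind_beta (k : fieldType) : Kbbeta k :=
  FracField.tofrac ('X : {poly Kb k}).

From HB Require Import structures.
From mathcomp Require Import all_boot all_order all_algebra.
From mathcomp Require Import fraction generic_quotient ring zify.
Import GRing.Theory.
Local Open Scope ring_scope.

(* The conic  a^2 beta (1 - beta^2) = alpha^2 b (1 - b^2) + b beta (b^2 - beta^2)
   over K(beta), K = k(b), has no rational point: an infinite descent along the
   beta-adic valuation.  After clearing denominators a point gives polynomials
   P, R, Q in K[X] (X = beta), Q <> 0, with
       P^2 X F = c R^2 + X D Q^2,      c = b (1 - b^2),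
   where F(0) = 1 and D(0) = e = b^3.  Evaluating at X = 0 forces X | R; then,
   since e is not a square in K, also X | P and X | Q, and dividing out gives a
   solution with a smaller Q. *)

Local Notation "x %:F" := (FracField.tofrac x).

Lemma fraction_numden {R : idomainType} (x : {fraction R}) :
  exists n d : R, d != 0 /\ x = n%:F / d%:F.
Proof.
elim/quotW: x => r; exists (\n_r), (\d_r); split; first exact: denom_ratioP.
have dF : (\d_r)%:F != 0 by rewrite tofrac_eq0 denom_ratioP.
apply: (mulIf dF); rewrite divfK //.
unlock FracField.tofrac; rewrite -[_ * _]FracField.pi_mul.
apply/eqmodP => /=; rewrite FracField.equivfE /FracField.mulf.
by rewrite !numden_Ratio ?oner_neq0 ?mulf_neq0 ?denom_ratioP ?oner_neq0 // !mulr1 mulrC.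
Qed.

Lemma mulX_of_horner0 (L : fieldType) (p : {poly L}) :
  p.[0] = 0 -> exists q, p = q * 'X.
Proof.
move=> p0; have /factor_theorem [q ->] : root p 0 by apply/eqP.
by exists q; rewrite subr0.
Qed.

Definition horner0E := (horner_exp, hornerD, hornerN, hornerM, hornerX, hornerC, expr0n).

Section Descent.
Variables (L : fieldType) (c e : L) (F D : {poly L}).
Hypotheses (c_neq0 : c != 0) (F0 : F.[0] = 1) (D0 : D.[0] = e).
Hypothesis e_nonsquare : forall u : L, u ^+ 2 != e.

Definition conic_sol (P R Q : {poly L}) : Prop :=
  P ^+ 2 * 'X * F = c%:P * R ^+ 2 + 'X * D * Q ^+ 2.

(* One step of the descent: P, R and Q are all divisible by X, and the
   quotients form a solution with a smaller Q. *)
Lemma descent_step {P R Q : {poly L}} : Q != 0 -> conic_sol P R Q ->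
  exists P1 R1 Q1 : {poly L}, [/\ Q1 != 0, (size Q1 < size Q)%N & conic_sol P1 R1 Q1].
Proof.
move=> Q_neq0 E.
have X_neq0 : ('X : {poly L}) != 0 by rewrite polyX_eq0.
have /mulX_of_horner0 [R1 defR] : R.[0] = 0.
  have := congr1 (horner^~ 0) E; rewrite /= !horner0E => /esym/eqP.
  by rewrite !(mulr0, mul0r, addr0) mulf_eq0 (negPf c_neq0) expf_eq0 => /eqP.
have E1 : P ^+ 2 * F = c%:P * R1 ^+ 2 * 'X + D * Q ^+ 2.
  by apply: (mulfI X_neq0); rewrite mulrA (mulrC 'X) E defR; ring.
have E10 := congr1 (horner^~ 0) E1; rewrite /= !horner0E F0 D0 mulr1 mulr0 add0r in E10.
have Q0 : Q.[0] = 0.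
  apply/eqP; apply: contraT => Q0_neq0; case/eqP: (e_nonsquare (P.[0] / Q.[0])).
  by rewrite expr_div_n E10 mulfK // expf_neq0.
have /mulX_of_horner0 [P1 defP] : P.[0] = 0.
  by apply/eqP; move: E10; rewrite Q0 expr0n mulr0 => /eqP; rewrite expf_eq0.
have /mulX_of_horner0 [Q1 defQ] := Q0.
have Q1_neq0 : Q1 != 0 by apply: contraNneq Q_neq0 => Q1_0; rewrite defQ Q1_0 mul0r.
exists P1, R1, Q1; split => //; first by rewrite defQ size_mulX.
apply: (mulfI X_neq0); transitivity ((P1 * 'X) ^+ 2 * F); first by ring.
by rewrite -defP E1 defQ; ring.
Qed.

Lemma no_polynomial_solution (P R Q : {poly L}) : Q != 0 -> ~ conic_sol P R Q.
Proof.
elim: {Q}(size Q) {-2}Q (leqnn (size Q)) P R => [|n IH] Q sizeQ P R Q_neq0 E.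
  by rewrite size_poly_leq0 (negPf Q_neq0) in sizeQ.
have [P1 [R1 [Q1 [Q1_neq0 ltQ1 E1]]]] := descent_step Q_neq0 E.
apply: (IH Q1 _ P1 R1 Q1_neq0 E1); by rewrite -ltnS (leq_trans ltQ1 sizeQ).
Qed.

End Descent.

(* The conic over L(X), for b <> 0 with 1 - b^2 <> 0 and b^3 not a square:
   clear the denominators of a solution and apply the polynomial descent with
   F = 1 - X^2 and D = b (b^2 - X^2). *)
Lemma no_fraction_solution {L : fieldType} {b : L} :
  b != 0 -> 1 - b ^+ 2 != 0 -> (forall u : L, u ^+ 2 != b ^+ 3) ->
  forall a alpha : {fraction {poly L}},
  a ^+ 2 * 'X%:F * (1 - 'X%:F ^+ 2)
  <> alpha ^+ 2 * b%:P%:F * (1 - b%:P%:F ^+ 2) + b%:P%:F * 'X%:F * (b%:P%:F ^+ 2 - 'X%:F ^+ 2).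
Proof.
move=> b_neq0 omb_neq0 b3_nonsquare a alpha.
have [pa [qa [qa_neq0 ->]]] := fraction_numden a.
have [pr [qr [qr_neq0 ->]]] := fraction_numden alpha.
move=> E.
have hF : (1 - 'X ^+ 2 : {poly L}).[0] = 1 by rewrite !horner0E subr0.
have hD : (b%:P * (b%:P ^+ 2 - 'X ^+ 2)).[0] = b ^+ 3.
  by rewrite !horner0E subr0 -exprS.
apply: (@no_polynomial_solution _ _ _ _ _ (mulf_neq0 b_neq0 omb_neq0) hF hD
         b3_nonsquare (pa * qr) (pr * qa) _ (mulf_neq0 qa_neq0 qr_neq0)).
rewrite /conic_sol; apply/eqP; rewrite -tofrac_eq; apply/eqP.
rewrite polyCM polyCB polyC1 polyC_exp.
rewrite !(tofracXn, tofracB, tofracD, tofracM, tofracN, tofrac1).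
move: E; set A := pa%:F / qa%:F; set B := pr%:F / qr%:F => E.
have defA : pa%:F = A * qa%:F by rewrite divfK // tofrac_eq0.
have defB : pr%:F = B * qr%:F by rewrite divfK // tofrac_eq0.
(* the polynomial identity is the rational one multiplied by (qa qr)^2 *)
rewrite defA defB.
transitivity ((qa%:F * qr%:F) ^+ 2 * (A ^+ 2 * 'X%:F * (1 - 'X%:F ^+ 2))); first by ring.
by rewrite E; ring.
Qed.

(* The indeterminate X is not a square in k(X): a square n^2 = X d^2 of
   polynomials would have odd and even degree at once. *)
Lemma indeterminate_nonsquare {k : fieldType} (u : {fraction {poly k}}) :
  u ^+ 2 != 'X%:F.
Proof.
apply/eqP; have [n [d [d_neq0 ->]]] := fraction_numden u.
have td : d%:F != 0 by rewrite tofrac_eq0.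
rewrite expr_div_n => /(congr1 ( *%R^~ (d%:F ^+ 2))); rewrite divfK ?expf_neq0 //.
rewrite -!tofracXn -tofracM => /eqP; rewrite tofrac_eq => /eqP E.
have d2_neq0 : d ^+ 2 != 0 by rewrite expf_neq0.
have sz_n := size_exp n 2; have sz_d := size_exp d 2.
have sz_Xd : size ('X * d ^+ 2) = (size (d ^+ 2)).+1 by rewrite mulrC size_mulX.
have d2_gt0 : (0 < size (d ^+ 2))%N by rewrite size_poly_gt0.
rewrite -E in sz_Xd; move: sz_n sz_d sz_Xd d2_gt0.
move: (size (n ^+ 2)) (size (d ^+ 2)) (size n).-1 (size d).-1; lia.
Qed.

Theorem mainTheorem8 (k : fieldType) (hchar : 2%N \notin [pchar k])
  (hi : exists i : k, i ^+ 2 = -1) :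
  ~ exists a alpha : Kbbeta k,
      a ^+ 2 * ind_beta k * (1 - ind_beta k ^+ 2)
      = alpha ^+ 2 * ind_b k * (1 - ind_b k ^+ 2)
        + ind_b k * ind_beta k * (ind_b k ^+ 2 - ind_beta k ^+ 2).
Proof.
move=> [a [alpha E]].
pose b : Kb k := 'X%:F.
have b_neq0 : b != 0 by rewrite tofrac_eq0 polyX_eq0.
have omb_neq0 : 1 - b ^+ 2 != 0.
  rewrite -tofrac1 -tofracXn -tofracB tofrac_eq0.
  apply/eqP => /(congr1 (horner^~ 0)) /eqP.
  by rewrite /= !horner0E subr0 oner_eq0.
have b3_nonsquare (u : Kb k) : u ^+ 2 != b ^+ 3.
  apply: (contraNneq _ (indeterminate_nonsquare (u / b))) => u2; apply/eqP.
  by rewrite expr_div_n u2 exprS mulfK ?expf_neq0.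
exact: (no_fraction_solution b_neq0 omb_neq0 b3_nonsquare _ _ E).
Qed.
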